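(* For every integer $\ell\ge 2$, $m_0(\ell)>\ell\, m_{\ell-1}(\ell)$.
   Context: For $S\subset[n]$, $\mathcal F(\overline S)=\{F\in\mathcal F: F\cap S=\emptyset\}$ and $\gamma_j(\mathcal F)=\min_{S\in\binom{[n]}{j}}|\mathcal F(\overline S)|$ (so $\gamma_0(\mathcal F)=|\mathcal F|$). $\tau(\mathcal F)$ is the minimum size of a set meeting all members of $\mathcal F$. For $0\le j<k$, $m_j(k)$ is the maximum of $\gamma_j(\mathcal F)$ over all $n$ and all intersecting families $\mathcal F\subset\binom{[n]}{k}$ (any two members intersect) with $\tau(\mathcal F)=k$. *)

From mathcomp Require Import all_boot.
Set Implicit Arguments. Unset Strict Implicit. Unset Printing Implicit Defensive.

Definition uniform (n k : nat) (F : {set {set 'I_n}}) : Prop :=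
  forall A, A \in F -> #|A| = k.

Definition intersecting (n : nat) (F : {set {set 'I_n}}) : Prop :=
  forall A B, A \in F -> B \in F -> A :&: B != set0.

Definition transversal (n : nat) (F : {set {set 'I_n}}) (T : {set 'I_n}) : Prop :=
  forall A, A \in F -> T :&: A != set0.

Definition tau_eq (n : nat) (F : {set {set 'I_n}}) (t : nat) : Prop :=
  (exists T, transversal F T /\ #|T| = t) /\
  (forall T, transversal F T -> t <= #|T|).

Definition avoid (n : nat) (F : {set {set 'I_n}}) (S : {set 'I_n}) : {set {set 'I_n}} :=
  [set A in F | A :&: S == set0].

(* gamma_j(F) = min over j-subsets S of [n] of |F(\bar S)|.
   (#|F| is a harmless neutral element: every term is <= #|F|.) *)
Definition gamma (n j : nat) (F : {set {set 'I_n}}) : nat :=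
  \big[minn/#|F|]_(S : {set 'I_n} | #|S| == j) #|avoid F S|.

Definition admissible (n k : nat) (F : {set {set 'I_n}}) : Prop :=
  uniform k F /\ intersecting F /\ tau_eq F k.

Definition is_m (j k v : nat) : Prop :=
  (exists n (F : {set {set 'I_n}}), admissible k F /\ gamma j F = v) /\
  (forall n (F : {set {set 'I_n}}), admissible k F -> gamma j F <= v).

From Pilot Require Import Defs.
From mathcomp Require Import all_boot order zify.
From Stdlib Require Import Classical.
Import Order.TTheory.
Set Implicit Arguments. Unset Strict Implicit.

(* Fix an admissible F attaining m_{l-1}(l) and a member A of F.  For each x in A,
   the (l-1)-set A \ x gives gamma_{l-1}(F) <= |F(complement of A \ x)|.  A member B
   avoiding A \ x meets A exactly in x, so summing over the l points of A counts every
   B <> A at most once and A itself never: l m_{l-1}(l) <= |F| - 1 < |F| <= m_0(l).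
   Both maxima exist because a family with covering number l has at most l^l members. *)

Lemma card_bigcup_leq_sum (T I : finType) (P : {pred I}) (S : I -> {set T}) :
  #|\bigcup_(i in P) S i| <= \sum_(i in P) #|S i|.
Proof.
elim/big_ind2: _ => [|m X k Y leXm leYk|//]; first by rewrite cards0.
by rewrite (leq_trans (leq_card_setU X Y)) ?leq_add.
Qed.

Lemma sum_card_sep_exchange (I J : finType) (A : {pred I}) (B : {pred J})
    (R : I -> J -> bool) :
  \sum_(i in A) #|[set j in B | R i j]| = \sum_(j in B) #|[set i in A | R i j]|.
Proof.
have card_sep (K : finType) (C : {pred K}) (p : pred K) :
    #|[set k in C | p k]| = \sum_(k in C) p k.
  rewrite -sum1_card big_mkcond [RHS]big_mkcond; apply: eq_bigr => k _.
  by rewrite inE; case: (k \in C); case: (p k).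
under eq_bigr do rewrite card_sep.
under [RHS]eq_bigr do rewrite card_sep.
exact: exchange_big.
Qed.

Lemma exists_subset_card (T : finType) (C : {set T}) k :
  k <= #|C| -> exists2 B : {set T}, B \subset C & #|B| = k.
Proof.
case/card_geqP => s [uniq_s size_s sub_sC]; exists [set x in s].
  by apply/subsetP => x; rewrite inE; apply: sub_sC.
by rewrite cardsE (card_uniqP uniq_s).
Qed.

Lemma bounded_nat_has_max (P : nat -> Prop) (B : nat) :
  (exists v, P v) -> (forall v, P v -> v <= B) ->
  exists v, P v /\ forall w, P w -> w <= v.
Proof.
elim: B => [|B IHB] [v Pv] bounded.
  exists v; split=> // w Pw; have := bounded w Pw; have := bounded v Pv.
  by rewrite !leqn0 => /eqP -> /eqP ->.
have [PB1|notPB1] := classic (P B.+1); first by exists B.+1.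
apply: IHB; first by exists v.
move=> w Pw; have := bounded w Pw; rewrite leq_eqVlt => /orP [/eqP ew|//].
by rewrite ew in Pw.
Qed.

Lemma card_pivots_leq1 (T : finType) (A B : {set T}) :
  B :&: A != set0 -> #|[set x in A | B :&: (A :\ x) == set0]| <= 1.
Proof.
case/set0Pn => z; rewrite inE => /andP [zB zA].
have pivot_eq x : B :&: (A :\ x) == set0 -> z = x.
  move=> /eqP BAx; apply/eqP/negPn/negP => zx.
  by have := in_set0 z; rewrite -BAx !inE zB zA zx.
apply/card_le1_eqP => x y; rewrite !inE => /andP [_ /pivot_eq <-].
by case/andP=> _ /pivot_eq.
Qed.

Lemma pivots_self_eq0 (T : finType) (A : {set T}) :
  1 < #|A| -> [set x in A | A :&: (A :\ x) == set0] = set0.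
Proof.
move=> A_gt1; apply/setP => x; rewrite !inE (setIidPr (subsetDl A [set x])).
apply/negbTE/negP => /andP [xA /eqP Ax0].
by move: A_gt1; rewrite (cardsD1 x A) xA Ax0 cards0.
Qed.

Lemma gamma_leq_card n j (F : {set {set 'I_n}}) : gamma j F <= #|F|.
Proof. exact: (@bigmin_le_id _ nat). Qed.

Lemma gamma_leq_avoid n j (F : {set {set 'I_n}}) (S : {set 'I_n}) :
  #|S| = j -> gamma j F <= #|avoid F S|.
Proof. by move=> cardS; apply: (@bigmin_le_cond _ nat); rewrite cardS. Qed.

Lemma gamma0 n (F : {set {set 'I_n}}) : gamma 0 F = #|F|.
Proof.
apply/eqP; rewrite eqn_leq gamma_leq_card /=.
apply: (@le_bigmin _ nat) => // S; rewrite cards_eq0 => /eqP ->.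
by apply: subset_leq_card; apply/subsetP => A FA; rewrite inE FA setI0 eqxx.
Qed.

Section UniformIntersecting.

Variables (n l : nat) (F : {set {set 'I_n}}).
Hypotheses (F_unif : uniform l F) (F_inter : intersecting F).
Hypothesis F_tau_ge : forall T, Defs.transversal F T -> l <= #|T|.

(* A set T with fewer than l points misses some G in F, and every member containing
   T meets G outside T: branch on the l points of G. *)
Lemma card_supersets_leq d (T : {set 'I_n}) :
  #|T| + d = l -> #|[set A in F | T \subset A]| <= l ^ d.
Proof.
elim: d T => [|d IHd] T cardT.
  apply/card_le1_eqP => A B; rewrite !inE addn0 in cardT *.
  have eqT C : C \in F -> T \subset C -> T = C.
    by move=> FC TC; apply/eqP; rewrite eqEcard TC (F_unif FC) cardT leqnn.
  by move=> /andP [FA TA] /andP [FB TB]; rewrite -(eqT A) // -(eqT B).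
have [G FG TG0] : exists2 G, G \in F & T :&: G == set0.
  apply/exists_inP; apply: contraT => /exists_inPn notT.
  have := F_tau_ge (fun A FA => notT A FA).
  by rewrite -cardT addnS ltnNge leq_addr.
have sub_cover : [set A in F | T \subset A] \subset
                 \bigcup_(x in G) [set A in F | (x |: T) \subset A].
  apply/subsetP => A; rewrite inE => /andP [FA TA].
  case/set0Pn: (F_inter FA FG) => x; rewrite inE => /andP [xA xG].
  by apply/bigcupP; exists x; rewrite // inE FA subUset sub1set xA TA.
apply: leq_trans (subset_leq_card sub_cover) _.
apply: leq_trans (card_bigcup_leq_sum _ _) _.
rewrite expnS -{1}(F_unif FG) -sum_nat_const; apply: leq_sum => x xG.
have xT : x \notin T.
  by apply: contraTN TG0 => xT; apply/set0Pn; exists x; rewrite inE xT.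
by apply: IHd; rewrite cardsU1 xT add1n addSn -addnS.
Qed.

Lemma card_leq_exp : #|F| <= l ^ l.
Proof.
have := @card_supersets_leq l set0.
rewrite cards0 => /(_ erefl); congr (_ <= _).
by apply: eq_card => A; rewrite inE sub0set andbT.
Qed.

Lemma mul_gamma_pred_lt_card A : 1 < l -> A \in F -> l * gamma l.-1 F < #|F|.
Proof.
move=> l_gt1 FA.
have cardAx x : x \in A -> #|A :\ x| = l.-1.
  by move=> xA; rewrite -(F_unif FA) (cardsD1 x A) xA.
have sum_avoid : l * gamma l.-1 F <= \sum_(x in A) #|avoid F (A :\ x)|.
  rewrite -{1}(F_unif FA) -sum_nat_const; apply: leq_sum => x xA.
  exact/gamma_leq_avoid/cardAx.
apply: leq_ltn_trans sum_avoid _.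
have A_gt1 : 1 < #|A| by rewrite (F_unif FA).
rewrite sum_card_sep_exchange (bigD1 A) //= pivots_self_eq0 // cards0 add0n.
rewrite (cardsD1 A F) FA add1n ltnS -sum1_card.
rewrite [X in _ <= X](eq_bigl (fun B => (B \in F) && (B != A))) => [|B]; last first.
  by rewrite !inE andbC.
apply: leq_sum => B /andP [FB _]; apply: card_pivots_leq1.
by rewrite setIC F_inter.
Qed.

End UniformIntersecting.

Lemma intersecting_of_small_ground n l (A B : {set 'I_n}) :
  n < l + l -> #|A| = l -> #|B| = l -> A :&: B != set0.
Proof.
move=> n_lt cardA cardB; apply/negP => /eqP AB0.
have := cardsUI A B; rewrite AB0 cards0 addn0 cardA cardB => cardAUB.
have := max_card (mem (A :|: B)); rewrite card_ord cardAUB; lia.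
Qed.

(* An l-set meets every l-set of a (2l-1)-set, and the complement of a smaller
   set still contains one. *)
Lemma admissible_ksubsets n l :
  n.+1 = l + l -> admissible l [set A : {set 'I_n} | #|A| == l].
Proof.
move=> n_eq; have n_lt : n < l + l by rewrite -n_eq.
split; [|split; [|split]].
- by move=> A; rewrite inE => /eqP.
- move=> A B; rewrite !inE => /eqP cardA /eqP cardB.
  exact: intersecting_of_small_ground n_lt cardA cardB.
- have [T _ cardT] : exists2 T : {set 'I_n}, T \subset setT & #|T| = l.
    by apply: exists_subset_card; rewrite cardsT card_ord; lia.
  exists T; split=> // A; rewrite inE => /eqP cardA.
  exact: intersecting_of_small_ground n_lt cardT cardA.
- move=> T transT; rewrite leqNgt; apply/negP => small_T.
  have [B sub_BTc cardB] : exists2 B : {set 'I_n}, B \subset ~: T & #|B| = l.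
    by apply: exists_subset_card; have := cardsC T; rewrite card_ord; lia.
  have := transT B; rewrite inE cardB eqxx => /(_ isT); apply/negP/negPn.
  by rewrite setIC setI_eq0 disjoints_subset.
Qed.

Lemma admissible_exists l : 0 < l -> exists n (F : {set {set 'I_n}}), admissible l F.
Proof.
move=> l_gt0; exists (l + l.-1), [set A : {set _} | #|A| == l].
by apply: admissible_ksubsets; lia.
Qed.

Lemma admissible_card_leq n l (F : {set {set 'I_n}}) : admissible l F -> #|F| <= l ^ l.
Proof. by case=> F_unif [F_inter [_ tau_ge]]; apply: card_leq_exp. Qed.

Lemma admissible_neq0 n l (F : {set {set 'I_n}}) :
  0 < l -> admissible l F -> exists A, A \in F.
Proof.
move=> l_gt0 [_ [_ [_ tau_ge]]].
have [/set0Pn //|/negPn/eqP F0] := boolP (F != set0).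
have trans0 : Defs.transversal F set0 by move=> A; rewrite F0 inE.
by have := tau_ge _ trans0; rewrite cards0 leqNgt l_gt0.
Qed.

Lemma is_m_exists j l : 0 < l -> exists v, is_m j l v.
Proof.
move=> l_gt0.
pose P v := exists n (F : {set {set 'I_n}}), admissible l F /\ gamma j F = v.
have [n0 [F0 adm0]] := admissible_exists l_gt0.
have P_gamma0 : P (gamma j F0) by exists n0, F0.
have P_bounded v : P v -> v <= l ^ l.
  case=> n [F [admF <-]].
  exact: leq_trans (gamma_leq_card _ _) (admissible_card_leq admF).
have [v [Pv v_max]] := bounded_nat_has_max (ex_intro P _ P_gamma0) P_bounded.
by exists v; split=> // n F admF; apply: v_max; exists n, F.
Qed.

Theorem proposition5p1 (l : nat) (hl : 2 <= l) :
  exists a b : nat, [/\ is_m 0 l a, is_m l.-1 l b & l * b < a].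
Proof.
have l_gt0 : 0 < l by apply: ltnW.
have [a m_a] := is_m_exists 0 l_gt0.
have [b m_b] := is_m_exists l.-1 l_gt0.
exists a, b; split=> //.
have [[n [F [admF <-]]] _] := m_b.
have [A FA] := admissible_neq0 l_gt0 admF.
have [F_unif [F_inter _]] := admF.
apply: leq_trans (mul_gamma_pred_lt_card F_unif F_inter hl FA) _.
by rewrite -gamma0; apply: m_a.2.
Qed.
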